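(* Let $K=2$, let $-1<\ell\le u<1$, and for $\rho\in[\ell,u]$ let $M_\rho=\begin{pmatrix}1&\rho\\ \rho&1\end{pmatrix}$. Fix $\alpha\in(0,1)$ and let $c(\rho)$ denote the $1-\alpha$ quantile, $c(\rho)=\inf\{c:\mathbb{P}\{\bar\chi^2(M_\rho^{-1},\Lambda_+)\le c\}\ge1-\alpha\}$. Then $c(\ell)\ge c(\rho)$ for every $\rho\in[\ell,u]$; i.e., the most conservative (largest) $1-\alpha$ quantile over this set of correlation matrices is attained at $\rho=\ell$.
   Context: $\Lambda_+=\{\lambda\in\mathbb{R}^2:\lambda_1\ge0,\lambda_2\ge0,\ \lambda_1+\lambda_2>0\}$. For a positive definite $2\times2$ matrix $V$, the chi-bar-squared distribution $\bar\chi^2(V,\Lambda_+)$ is the law of $X^TV^{-1}X-\inf_{\theta\in\Lambda_+}(X-\theta)^TV^{-1}(X-\theta)$ where $X\sim N_2(0,V)$. *)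

From Stdlib Require Import Reals Lra ClassicalEpsilon.
Open Scope R_scope.

(* A symmetric 2x2 matrix [[v11, v12]; [v12, v22]]. *)
Record sym2 := Sym2 { m11 : R; m12 : R; m22 : R }.

Definition det2 (V : sym2) : R := m11 V * m22 V - m12 V * m12 V.

Definition posdef2 (V : sym2) : Prop := 0 < m11 V /\ 0 < det2 V.

Definition inv2 (V : sym2) : sym2 :=
  Sym2 (m22 V / det2 V) (- m12 V / det2 V) (m11 V / det2 V).

Definition qform (A : sym2) (x1 x2 : R) : R :=
  m11 A * x1 * x1 + 2 * m12 A * x1 * x2 + m22 A * x2 * x2.

Definition Mrho (rho : R) : sym2 := Sym2 1 rho 1.

Definition LambdaPlus (t1 t2 : R) : Prop := 0 <= t1 /\ 0 <= t2 /\ 0 < t1 + t2.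

Definition is_glb (S : R -> Prop) (m : R) : Prop :=
  (forall x, S x -> m <= x) /\ (forall b, (forall x, S x -> b <= x) -> b <= m).

(* the infimum of a set of reals (chosen by classical epsilon; meaningful
   whenever the glb exists, which is the case below: nonempty, bounded below by 0) *)
Definition Rinf (S : R -> Prop) : R :=
  epsilon (inhabits 0) (fun m => is_glb S m).

Definition chibar_stat (V : sym2) (x1 x2 : R) : R :=
  qform (inv2 V) x1 x2 -
  Rinf (fun s => exists t1 t2, LambdaPlus t1 t2 /\ s = qform (inv2 V) (x1 - t1) (x2 - t2)).

Definition gauss_dens (V : sym2) (x1 x2 : R) : R :=
  / (2 * PI * sqrt (det2 V)) * exp (- qform (inv2 V) x1 x2 / 2).

Definition indic (P : Prop) : R :=
  if excluded_middle_informative P then 1 else 0.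

Definition RInt_is (f : R -> R) (a b v : R) : Prop :=
  exists pr : Riemann_integrable f a b, RiemannInt pr = v.

Definition improper_is (f : R -> R) (v : R) : Prop :=
  forall eps, 0 < eps -> exists N, forall a b, a <= - N -> N <= b ->
    exists w, RInt_is f a b w /\ Rabs (w - v) < eps.

(* P{ chibar^2(V, Lambda_+) <= c } = p, with X ~ N_2(0,V), computed as the
   iterated (improper Riemann) integral of the indicator times the density *)
Definition chibar_cdf (V : sym2) (c p : R) : Prop :=
  exists g : R -> R,
    (forall x1, improper_is
        (fun x2 => indic (chibar_stat V x1 x2 <= c) * gauss_dens V x1 x2) (g x1))
    /\ improper_is g p.

Definition is_quantile (V : sym2) (alpha q : R) : Prop :=
  is_glb (fun c => exists p, chibar_cdf V c p /\ 1 - alpha <= p) q.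

(* For -1 < rho < 1 the matrix V = inv2 (Mrho rho) has V^{-1} = Mrho rho, so
   X ~ N_2(0, V) and the statistic is built from the quadratic form
   Q_rho(x) = x1^2 + 2 rho x1 x2 + x2^2.

   The theorem is a coupling argument.  For l <= r put a = sqrt((1-r^2)/(1-l^2))
   and b = r - l a; then a > 0, b >= 0 and the linear map
   T(z1, z2) = (a z1, b z1 + z2) satisfies Q_l o T = Q_r, maps the cone Lambda_+
   into itself and has Jacobian a.  Hence the statistic for l at T z bounds the
   statistic for r at z from above, and changing variables by T in the iterated
   integral gives P_l{stat <= c} <= P_r{stat <= c} for every c; the quantiles
   are therefore ordered the other way round.

   Because the probabilities are iterated improper Riemann integrals, the
   comparison is only useful once P_r{stat <= c} is shown to exist. *)

From Stdlib Require Import Reals Lra Psatz ClassicalEpsilon.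
From Coquelicot Require Import Coquelicot.
Open Scope R_scope.

Definition improper_RInt (f : R -> R) (v : R) : Prop :=
  forall eps, 0 < eps -> exists N, forall a b, a <= - N -> N <= b ->
    exists w, is_RInt f a b w /\ Rabs (w - v) < eps.

Lemma RInt_is_iff f a b w : RInt_is f a b w <-> is_RInt f a b w.
Proof.
  split.
  - intros [pr H]. rewrite <- H, <- RInt_Reals.
    exact (RInt_correct f a b (ex_RInt_Reals_1 _ _ _ pr)).
  - intros H. exists (ex_RInt_Reals_0 _ _ _ (ex_intro _ w H)).
    rewrite <- RInt_Reals. now apply is_RInt_unique.
Qed.

Lemma improper_is_iff f v : improper_is f v <-> improper_RInt f v.
Proof.
  split; intros H eps Heps; destruct (H eps Heps) as [N HN]; exists N;
  intros a b Ha Hb; destruct (HN a b Ha Hb) as [w [Hw1 Hw2]]; exists w;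
  split; auto; apply RInt_is_iff; auto.
Qed.

Lemma improper_RInt_ext f g v :
  (forall x, f x = g x) -> improper_RInt f v -> improper_RInt g v.
Proof.
  intros E H eps Heps; destruct (H eps Heps) as [N HN]; exists N;
  intros a b Ha Hb; destruct (HN a b Ha Hb) as [w [Hw1 Hw2]]; exists w;
  split; auto. eapply is_RInt_ext; [|exact Hw1]. intros; auto.
Qed.

Lemma is_RInt_zero a b : is_RInt (fun _ => 0) a b 0.
Proof.
  pose proof (is_RInt_const (V:=R_NormedModule) a b 0) as H.
  replace (scal (b - a) (0:R_NormedModule)) with 0 in H; auto.
  unfold scal; simpl; unfold mult; simpl. ring.
Qed.

Lemma improper_RInt_zero : improper_RInt (fun _ => 0) 0.
Proof.
  intros eps Heps. exists 0. intros a b _ _. exists 0. split.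
  - apply is_RInt_zero.
  - rewrite Rminus_0_r, Rabs_R0. auto.
Qed.

Lemma improper_RInt_shift f v d :
  improper_RInt f v -> improper_RInt (fun y => f (y + d)) v.
Proof.
  intros H eps Heps; destruct (H eps Heps) as [N HN]; exists (N + Rabs d).
  intros a b Ha Hb.
  pose proof (Rle_abs d); pose proof (Rle_abs (-d)); rewrite Rabs_Ropp in *.
  destruct (HN (a + d) (b + d)) as [w [Hw1 Hw2]]; [lra|lra|].
  exists w; split; auto.
  assert (Hw : is_RInt f (1 * a + d) (1 * b + d) w) by (now rewrite !Rmult_1_l).
  apply is_RInt_comp_lin in Hw.
  eapply is_RInt_ext; [|exact Hw]. intros x _. simpl.
  unfold scal; simpl; unfold mult; simpl. now rewrite !Rmult_1_l.
Qed.

Lemma improper_RInt_dilate f v k :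
  0 < k -> improper_RInt f v -> improper_RInt (fun y => k * f (k * y)) v.
Proof.
  intros Hk H eps Heps; destruct (H eps Heps) as [N HN]; exists (Rabs N / k).
  intros a b Ha Hb.
  pose proof (Rle_abs N). pose proof (Rle_abs (-N)); rewrite Rabs_Ropp in *.
  assert (Hscale : Rabs N / k * k = Rabs N) by (field; lra).
  assert (Ha' : k * a + 0 <= - N).
  { assert (Hak : a * k <= - (Rabs N / k) * k) by (apply Rmult_le_compat_r; lra).
    lra. }
  assert (Hb' : N <= k * b + 0).
  { assert (Hbk : Rabs N / k * k <= b * k) by (apply Rmult_le_compat_r; lra).
    lra. }
  destruct (HN _ _ Ha' Hb') as [w [Hw1 Hw2]]; exists w; split; auto.
  apply is_RInt_comp_lin in Hw1.
  eapply is_RInt_ext; [|exact Hw1]. intros x _. simpl.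
  unfold scal; simpl; unfold mult; simpl. now rewrite Rplus_0_r.
Qed.

Lemma improper_RInt_scal f v k :
  improper_RInt f v -> improper_RInt (fun y => k * f y) (k * v).
Proof.
  intros H eps Heps.
  assert (Hk : 0 < Rabs k + 1) by (pose proof (Rabs_pos k); lra).
  destruct (H (eps / (Rabs k + 1))) as [N HN]; [apply Rdiv_lt_0_compat; auto|].
  exists N. intros a b Ha Hb.
  destruct (HN _ _ Ha Hb) as [w [Hw1 Hw2]]; exists (k * w); split.
  - exact (is_RInt_scal _ _ _ k _ Hw1).
  - replace (k * w - k * v) with (k * (w - v)) by ring. rewrite Rabs_mult.
    pose proof (Rabs_pos k). pose proof (Rabs_pos (w - v)).
    apply Rmult_lt_compat_l with (r := Rabs k + 1) in Hw2; auto.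
    replace ((Rabs k + 1) * (eps / (Rabs k + 1))) with eps in Hw2 by (field; lra).
    nra.
Qed.

Lemma improper_RInt_le f g v w :
  improper_RInt f v -> improper_RInt g w -> (forall x, f x <= g x) -> v <= w.
Proof.
  intros Hf Hg Hle. destruct (Rle_or_lt v w) as [|Hlt]; auto. exfalso.
  set (e := (v - w) / 2).
  assert (He : 0 < e) by (unfold e; lra).
  destruct (Hf e He) as [N1 H1]. destruct (Hg e He) as [N2 H2].
  set (M := Rabs N1 + Rabs N2).
  pose proof (Rle_abs N1). pose proof (Rle_abs (-N1)).
  pose proof (Rle_abs N2). pose proof (Rle_abs (-N2)). rewrite Rabs_Ropp in *.
  destruct (H1 (-M) M) as [w1 [A1 B1]]; try (unfold M; lra).
  destruct (H2 (-M) M) as [w2 [A2 B2]]; try (unfold M; lra).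
  assert (w1 <= w2) by (eapply is_RInt_le; [| exact A1 | exact A2 | ]; [unfold M; lra | auto]).
  apply Rabs_def2 in B1. apply Rabs_def2 in B2. unfold e in *. lra.
Qed.

Lemma improper_RInt_of_bounded f :
  (forall x, 0 <= f x) -> (forall a b, ex_RInt f a b) ->
  (exists B, forall a b, a <= b -> RInt f a b <= B) -> exists v, improper_RInt f v.
Proof.
  intros Hpos Hex [B HB].
  set (E := fun r => exists a b, a <= b /\ r = RInt f a b).
  assert (HbE : bound E) by (exists B; intros r [a [b [Hab ->]]]; auto).
  assert (HnE : exists r, E r) by (exists (RInt f 0 0), 0, 0; split; [lra|auto]).
  destruct (completeness E HbE HnE) as [v [Hub Hlub]].
  exists v. intros eps Heps.
  assert (exists r, E r /\ v - eps < r) as [r [[a0 [b0 [Hab0 ->]]] Hr]].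
  { apply NNPP. intros Hn. assert (v <= v - eps); [|lra].
    apply Hlub. intros r Er. destruct (Rle_or_lt r (v - eps)); auto.
    exfalso; apply Hn; exists r; auto. }
  exists (Rabs a0 + Rabs b0). intros a b Ha Hb.
  pose proof (Rle_abs a0). pose proof (Rle_abs (-a0)).
  pose proof (Rle_abs b0). pose proof (Rle_abs (-b0)). rewrite Rabs_Ropp in *.
  pose proof (Rabs_pos a0). pose proof (Rabs_pos b0).
  exists (RInt f a b). split; [exact (RInt_correct f a b (Hex a b))|].
  assert (RInt f a b <= v) by (apply Hub; exists a, b; split; auto; lra).
  assert (RInt f a0 b0 <= RInt f a b).
  { rewrite <- (RInt_Chasles f a a0 b), <- (RInt_Chasles f a0 b0 b); auto.
    assert (0 <= RInt f a a0) by (apply RInt_ge_0; auto; lra).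
    assert (0 <= RInt f b0 b) by (apply RInt_ge_0; auto; lra).
    unfold plus; simpl. lra. }
  rewrite Rabs_left1; lra.
Qed.

Definition Qrho (r x1 x2 : R) : R := x1 * x1 + 2 * r * x1 * x2 + x2 * x2.

Lemma inv2_inv2_Mrho r : -1 < r < 1 -> inv2 (inv2 (Mrho r)) = Mrho r.
Proof.
  intros Hr. unfold inv2, det2, Mrho; simpl.
  assert (1 * 1 - r * r <> 0) by nra.
  f_equal; field; repeat split; auto; nra.
Qed.

Lemma det2_inv2_Mrho r : -1 < r < 1 -> det2 (inv2 (Mrho r)) = / (1 - r * r).
Proof. intros Hr. unfold inv2, det2, Mrho; simpl. field. nra. Qed.

Lemma qform_Mrho r x1 x2 : qform (Mrho r) x1 x2 = Qrho r x1 x2.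
Proof. unfold qform, Mrho, Qrho; simpl; ring. Qed.

(* Q_rho(x) = (x1 + rho x2)^2 + (1 - rho^2) x2^2 >= 0. *)
Lemma Qrho_nonneg r x1 x2 : -1 < r < 1 -> 0 <= Qrho r x1 x2.
Proof.
  intros Hr. unfold Qrho.
  assert (0 <= (1 - r * r) * (x2 * x2)) by (apply Rmult_le_pos; nra).
  pose proof (Rle_0_sqr (x1 + r * x2)). unfold Rsqr in *. nra.
Qed.

Lemma gauss_dens_Mrho r x1 x2 : -1 < r < 1 ->
  gauss_dens (inv2 (Mrho r)) x1 x2 =
  sqrt (1 - r * r) / (2 * PI) * exp (- Qrho r x1 x2 / 2).
Proof.
  intros Hr. unfold gauss_dens.
  rewrite inv2_inv2_Mrho, qform_Mrho, det2_inv2_Mrho by auto.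
  assert (Hk : 0 < 1 - r * r) by nra.
  rewrite sqrt_inv. pose proof (sqrt_lt_R0 _ Hk). pose proof PI_RGT_0.
  field. split; lra.
Qed.

Lemma gauss_dens_Mrho_nonneg r x1 x2 : -1 < r < 1 ->
  0 <= gauss_dens (inv2 (Mrho r)) x1 x2.
Proof.
  intros Hr. rewrite gauss_dens_Mrho by auto.
  apply Rmult_le_pos; [|left; apply exp_pos].
  apply Rmult_le_pos; [apply sqrt_pos|].
  left. apply Rinv_0_lt_compat. pose proof PI_RGT_0; lra.
Qed.

Lemma Rinf_glb (S : R -> Prop) :
  (exists x, S x) -> (forall x, S x -> 0 <= x) -> is_glb S (Rinf S).
Proof.
  intros [x0 Hx0] Hlb. unfold Rinf. apply epsilon_spec.
  set (E := fun y => S (- y)).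
  assert (HbE : bound E) by (exists 0; intros y Hy; apply Hlb in Hy; lra).
  assert (HnE : exists y, E y) by (exists (- x0); unfold E; rewrite Ropp_involutive; auto).
  destruct (completeness E HbE HnE) as [m [Hub Hlub]].
  exists (- m). split.
  - intros x Sx. assert (HE : E (- x)) by (unfold E; rewrite Ropp_involutive; auto).
    apply Hub in HE. lra.
  - intros b Hb. assert (m <= - b); [|lra]. apply Hlub. intros y Ey. apply Hb in Ey. lra.
Qed.

(* The statistic is the supremum over the cone of the gain
   Q(x) - Q(x - t), so [stat <= c] means every gain is at most c. *)
Lemma chibar_stat_le_iff r x1 x2 c : -1 < r < 1 ->
  (chibar_stat (inv2 (Mrho r)) x1 x2 <= c <->
   forall t1 t2, LambdaPlus t1 t2 -> Qrho r x1 x2 - Qrho r (x1 - t1) (x2 - t2) <= c).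
Proof.
  intros Hr. unfold chibar_stat. rewrite inv2_inv2_Mrho, qform_Mrho by auto.
  set (S := fun s => exists t1 t2, LambdaPlus t1 t2 /\ s = qform (Mrho r) (x1 - t1) (x2 - t2)).
  assert (HS : is_glb S (Rinf S)).
  { apply Rinf_glb.
    - exists (qform (Mrho r) (x1 - 1) (x2 - 0)), 1, 0. unfold LambdaPlus; split; [lra|auto].
    - intros s [t1 [t2 [_ ->]]]. rewrite qform_Mrho. apply Qrho_nonneg; auto. }
  destruct HS as [Hlb Hgl]. split.
  - intros H t1 t2 Ht. assert (Rinf S <= Qrho r (x1 - t1) (x2 - t2)); [|lra].
    apply Hlb. exists t1, t2. split; auto. now rewrite qform_Mrho.
  - intros H. assert (Qrho r x1 x2 - c <= Rinf S); [|lra].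
    apply Hgl. intros s [t1 [t2 [Ht ->]]]. rewrite qform_Mrho. specialize (H t1 t2 Ht). lra.
Qed.

(* The acceptance region {stat <= c} in the coordinates (x1, y), y = x2 + rho x1
   (so that Q_rho(x) = y^2 + (1 - rho^2) x1^2).  The three conditions bound the
   gain along the two edges of the cone (where it is at most A^2 resp. y^2 with
   A = x1 + rho x2 = (1 - rho^2) x1 + rho y) and, when x lies in the cone, at
   t = x itself. *)
Definition accept (r c x1 y : R) : Prop :=
  y <= sqrt c /\ (1 - r * r) * x1 + r * y <= sqrt c /\
  (0 <= x1 -> r * x1 <= y -> y * y + (1 - r * r) * x1 * x1 <= c).

Section AcceptanceRegion.
Variables r c : R.
Hypothesis Hr : -1 < r < 1.
Hypothesis Hc : 0 <= c.

Lemma gain_expand x1 x2 t1 t2 :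
  Qrho r x1 x2 - Qrho r (x1 - t1) (x2 - t2) =
  2 * t1 * (x1 + r * x2) + 2 * t2 * (r * x1 + x2) - Qrho r t1 t2.
Proof. unfold Qrho; ring. Qed.

(* Testing the gain at t = (0, y), t = (A, 0) and t = x gives the region. *)
Lemma accept_of_gain_le x1 x2 :
  (forall t1 t2, LambdaPlus t1 t2 -> Qrho r x1 x2 - Qrho r (x1 - t1) (x2 - t2) <= c) ->
  accept r c x1 (x2 + r * x1).
Proof.
  intros H. pose proof (sqrt_pos c). pose proof (sqrt_sqrt c Hc).
  set (s := sqrt c) in *. unfold accept. fold s.
  set (A := x1 + r * x2).
  assert (HA : (1 - r * r) * x1 + r * (x2 + r * x1) = A) by (unfold A; ring).
  rewrite HA. split; [|split].
  - destruct (Rle_or_lt (x2 + r * x1) s) as [|Hlt]; auto. exfalso.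
    assert (Ht : LambdaPlus 0 (x2 + r * x1)) by (unfold LambdaPlus; lra).
    specialize (H _ _ Ht). rewrite gain_expand in H. unfold Qrho in H. nra.
  - destruct (Rle_or_lt A s) as [|Hlt]; auto. exfalso.
    assert (Ht : LambdaPlus A 0) by (unfold LambdaPlus; lra).
    specialize (H _ _ Ht). rewrite gain_expand in H. unfold Qrho, A in *. nra.
  - intros Hx1 Hy.
    destruct (Rle_or_lt ((x2 + r * x1) * (x2 + r * x1) + (1 - r * r) * x1 * x1) c)
      as [|Hlt]; auto. exfalso.
    assert (Hx2 : 0 <= x2) by nra.
    assert (Hsum : 0 < x1 + x2).
    { destruct (Rle_or_lt (x1 + x2) 0); auto.
      assert (E1 : x1 = 0) by lra. assert (E2 : x2 = 0) by lra.
      rewrite E1, E2 in Hlt. nra. }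
    specialize (H x1 x2 (conj Hx1 (conj Hx2 Hsum))). unfold Qrho in H. nra.
Qed.

(* Conversely, in the region every gain is at most c; the four cases are the
   four regions of the plane in which the maximizing t is x, lies on one of
   the two edges of the cone, or is 0. *)
Lemma gain_le_of_accept x1 x2 t1 t2 :
  accept r c x1 (x2 + r * x1) -> LambdaPlus t1 t2 ->
  Qrho r x1 x2 - Qrho r (x1 - t1) (x2 - t2) <= c.
Proof.
  intros [HB [HA Hin]] [Ht1 [Ht2 _]].
  pose proof (sqrt_pos c). pose proof (sqrt_sqrt c Hc) as Hss.
  set (s := sqrt c) in *.
  set (A := x1 + r * x2). set (B := r * x1 + x2).
  replace ((1 - r * r) * x1 + r * (x2 + r * x1)) with A in HA by (unfold A; ring).
  replace (x2 + r * x1) with B in HB by (unfold B; ring).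
  assert (Hq : 0 <= Qrho r t1 t2) by (apply Qrho_nonneg; auto).
  pose proof (Qrho_nonneg r (x1 - t1) (x2 - t2) Hr).
  rewrite gain_expand. fold A B. unfold Qrho in *.
  assert (Cases : (0 <= x1 /\ 0 <= x2) \/ (x2 <= 0 /\ 0 <= A) \/
                  (x1 <= 0 /\ 0 <= B) \/ (A <= 0 /\ B <= 0)).
  { unfold A, B. destruct (Rle_or_lt 0 x1); destruct (Rle_or_lt 0 x2);
    destruct (Rle_or_lt 0 (x1 + r * x2)); destruct (Rle_or_lt 0 (r * x1 + x2));
    first [ left; split; lra | right; left; split; lra
          | right; right; left; split; lra | right; right; right; split; lra
          | exfalso; assert (0 < r) by nra; nra ]. }
  destruct Cases as [[Hx1 Hx2]|[[Hx2 HA0]|[[Hx1 HB0]|[HA0 HB0]]]].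
  - (* x in the cone: the gain is Q(x) - Q(x - t) <= Q(x) *)
    assert ((x2 + r * x1) * (x2 + r * x1) + (1 - r * r) * x1 * x1 <= c) by (apply Hin; nra).
    unfold A, B. nra.
  - (* projection onto the edge t2 = 0 *)
    assert (A * A <= c) by (rewrite <- Hss; apply Rmult_le_compat; lra).
    assert (0 <= (1 - r * r) * t2 * (t2 - 2 * x2))
      by (apply Rmult_le_pos; [apply Rmult_le_pos|]; nra).
    pose proof (Rle_0_sqr (A - (t1 + r * t2))). unfold Rsqr, A, B in *. nra.
  - (* projection onto the edge t1 = 0 *)
    assert (B * B <= c) by (rewrite <- Hss; apply Rmult_le_compat; lra).
    assert (0 <= (1 - r * r) * t1 * (t1 - 2 * x1))
      by (apply Rmult_le_pos; [apply Rmult_le_pos|]; nra).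
    pose proof (Rle_0_sqr (B - (r * t1 + t2))). unfold Rsqr, A, B in *. nra.
  - (* projection onto the vertex: every gain is <= 0 *)
    assert (0 <= t1 * (- A)) by (apply Rmult_le_pos; lra).
    assert (0 <= t2 * (- B)) by (apply Rmult_le_pos; lra). lra.
Qed.

Lemma chibar_stat_le_accept x1 x2 :
  chibar_stat (inv2 (Mrho r)) x1 x2 <= c <-> accept r c x1 (x2 + r * x1).
Proof.
  rewrite chibar_stat_le_iff by auto. split.
  - apply accept_of_gain_le.
  - intros H t1 t2 Ht. apply gain_le_of_accept; auto.
Qed.

End AcceptanceRegion.

(* The statistic is nonnegative: gains along t = (d, 0) with d -> 0+ have
   the form 2 d A - d^2, which is > -eps for small d. *)
Lemma chibar_stat_nonneg r x1 x2 : -1 < r < 1 ->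
  0 <= chibar_stat (inv2 (Mrho r)) x1 x2.
Proof.
  intros Hr. destruct (Rle_or_lt 0 (chibar_stat (inv2 (Mrho r)) x1 x2)) as [|Hneg]; auto.
  exfalso. set (c := chibar_stat (inv2 (Mrho r)) x1 x2) in Hneg.
  assert (H : c <= c) by lra. unfold c at 1 in H.
  rewrite chibar_stat_le_iff in H by auto.
  set (A := x1 + r * x2). pose proof (Rabs_pos A).
  set (d := Rmin 1 (- c / (2 * (2 * Rabs A + 1)))).
  assert (Hd0 : 0 < d) by (apply Rmin_pos; [lra|]; apply Rdiv_lt_0_compat; lra).
  assert (Hd1 : d <= 1) by apply Rmin_l.
  assert (Hd2 : d * (2 * Rabs A + 1) <= - c / 2).
  { assert (Hd : d <= - c / (2 * (2 * Rabs A + 1))) by apply Rmin_r.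
    apply Rmult_le_compat_r with (r := 2 * Rabs A + 1) in Hd; [|lra].
    replace (- c / (2 * (2 * Rabs A + 1)) * (2 * Rabs A + 1)) with (- c / 2) in Hd
      by (field; lra). lra. }
  assert (Ht : LambdaPlus d 0) by (unfold LambdaPlus; lra).
  specialize (H d 0 Ht).
  replace (Qrho r x1 x2 - Qrho r (x1 - d) (x2 - 0)) with (2 * d * A - d * d) in H
    by (unfold Qrho, A; ring).
  assert (- (d * Rabs A) <= d * A).
  { destruct (Rle_or_lt 0 A).
    - rewrite Rabs_pos_eq by lra. nra.
    - rewrite Rabs_left by lra. nra. }
  nra.
Qed.

Lemma continuity_pt_continuous (f : R -> R) x : continuity_pt f x -> continuous f x.
Proof. intros H. apply continuity_pt_filterlim. exact H. Qed.

(* The Gaussian kernel exp(-k y^2) and the bound PI / sqrt k on its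
   integrals, obtained by comparison with 1 / (1 + k y^2) = (atan(sqrt k y)/sqrt k)'. *)
Definition gauss_kernel (k y : R) : R := exp (- (k * (y * y))).

Lemma gauss_kernel_cont k y : continuous (gauss_kernel k) y.
Proof. apply continuity_pt_continuous. unfold gauss_kernel. reg. Qed.

Lemma gauss_kernel_ex_RInt k a b : ex_RInt (gauss_kernel k) a b.
Proof.
  apply (ex_RInt_continuous (V:=R_CompleteNormedModule)).
  intros; apply gauss_kernel_cont.
Qed.

Lemma gauss_kernel_RInt_nonneg k a b : a <= b -> 0 <= RInt (gauss_kernel k) a b.
Proof.
  intros Hab. apply RInt_ge_0; auto; [apply gauss_kernel_ex_RInt|].
  intros; left; apply exp_pos.
Qed.

Lemma gauss_kernel_RInt_bound k a b :
  0 < k -> a <= b -> RInt (gauss_kernel k) a b <= PI / sqrt k.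
Proof.
  intros Hk Hab. pose proof (sqrt_lt_R0 k Hk) as Hs.
  pose proof (sqrt_sqrt k (Rlt_le _ _ Hk)) as Hss.
  set (F := fun y => atan (sqrt k * y) / sqrt k).
  assert (HI : is_RInt (fun y => / (1 + k * (y * y))) a b (minus (F b) (F a))).
  { apply (is_RInt_derive (V:=R_CompleteNormedModule)).
    - intros x _. unfold F. auto_derive; auto.
      match goal with |- ?a = ?b => change (@eq R a b) end.
      replace (sqrt k * x * (sqrt k * x * 1)) with (k * (x * x))
        by (rewrite <- Hss at 1; ring).
      assert (0 <= k * (x * x)) by nra. field. lra.
    - intros x _. apply continuity_pt_continuous. reg. nra. }
  assert (Hle : RInt (gauss_kernel k) a b <= minus (F b) (F a)).
  { rewrite <- (is_RInt_unique _ _ _ _ HI).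
    apply RInt_le; auto; [apply gauss_kernel_ex_RInt | eexists; exact HI |].
    intros x _. unfold gauss_kernel. assert (0 <= k * (x * x)) by nra.
    pose proof (exp_ineq1_le (k * (x * x))).
    rewrite exp_Ropp. apply Rinv_le_contravar; lra. }
  unfold minus, plus, opp in Hle; simpl in Hle. unfold F in Hle.
  pose proof (atan_bound (sqrt k * b)). pose proof (atan_bound (sqrt k * a)).
  replace (atan (sqrt k * b) / sqrt k + - (atan (sqrt k * a) / sqrt k))
    with ((atan (sqrt k * b) - atan (sqrt k * a)) / sqrt k) in Hle by (field; lra).
  apply (Rle_trans _ _ _ Hle). apply Rmult_le_compat_r; [|lra].
  left; apply Rinv_0_lt_compat; auto.
Qed.

Definition std_kernel : R -> R := gauss_kernel (/2).
Definition std_mass : R := PI / sqrt (/2).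

Lemma std_mass_pos : 0 < std_mass.
Proof. apply Rdiv_lt_0_compat; [apply PI_RGT_0 | apply sqrt_lt_R0; lra]. Qed.

Lemma std_kernel_RInt_bound a b : a <= b -> RInt std_kernel a b <= std_mass.
Proof. apply gauss_kernel_RInt_bound. lra. Qed.

(* Phi0 = int_{-oo}^0 std_kernel, as the supremum of the partial integrals,
   and the primitive Phi t = int_{-oo}^t std_kernel. *)
Definition left_partial (v : R) : Prop := exists a, a <= 0 /\ v = RInt std_kernel a 0.

Lemma left_partial_bound : bound left_partial.
Proof. exists std_mass. intros v [a [Ha ->]]. apply std_kernel_RInt_bound; auto. Qed.

Lemma left_partial_inhabited : exists v, left_partial v.
Proof. exists (RInt std_kernel 0 0), 0. split; auto; lra. Qed.

Definition Phi0 : R :=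
  proj1_sig (completeness left_partial left_partial_bound left_partial_inhabited).

Definition Phi (t : R) : R := Phi0 + RInt std_kernel 0 t.

Lemma Phi0_tail eps : 0 < eps ->
  exists N, forall a, a <= - N -> Rabs (RInt std_kernel a 0 - Phi0) < eps.
Proof.
  intros Heps.
  assert (Hlub : is_lub left_partial Phi0).
  { unfold Phi0. destruct (completeness _ _ _); auto. }
  destruct Hlub as [Hub Hlub].
  assert (exists v, left_partial v /\ Phi0 - eps < v) as [v [[a0 [Ha0 ->]] Hv]].
  { apply NNPP. intros Hn. assert (Phi0 <= Phi0 - eps); [|lra].
    apply Hlub. intros v Ev. destruct (Rle_or_lt v (Phi0 - eps)); auto.
    exfalso; apply Hn; exists v; auto. }
  exists (- a0). intros a Ha.
  assert (RInt std_kernel a 0 <= Phi0) by (apply Hub; exists a; split; auto; lra).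
  assert (RInt std_kernel a0 0 <= RInt std_kernel a 0).
  { rewrite <- (RInt_Chasles std_kernel a a0 0) by apply gauss_kernel_ex_RInt.
    pose proof (gauss_kernel_RInt_nonneg (/2) a a0 ltac:(lra)).
    unfold plus; simpl. unfold std_kernel. lra. }
  rewrite Rabs_left1; lra.
Qed.

Lemma Phi_tail t eps : 0 < eps ->
  exists N, forall a, a <= - N -> Rabs (RInt std_kernel a t - Phi t) < eps.
Proof.
  intros Heps. destruct (Phi0_tail eps Heps) as [N HN]. exists N. intros a Ha.
  rewrite <- (RInt_Chasles std_kernel a 0 t) by apply gauss_kernel_ex_RInt.
  unfold Phi, plus; simpl.
  replace (RInt std_kernel a 0 + RInt std_kernel 0 t - (Phi0 + RInt std_kernel 0 t))
    with (RInt std_kernel a 0 - Phi0) by ring.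
  auto.
Qed.

Lemma Phi_diff l h : Phi h - Phi l = RInt std_kernel l h.
Proof.
  unfold Phi. rewrite <- (RInt_Chasles std_kernel l 0 h) by apply gauss_kernel_ex_RInt.
  rewrite <- (opp_RInt_swap std_kernel 0 l) by apply gauss_kernel_ex_RInt.
  unfold plus, opp; simpl. ring.
Qed.

Lemma Phi_cont t : continuous Phi t.
Proof.
  unfold Phi. apply (continuous_plus (fun _ => Phi0) (fun t => RInt std_kernel 0 t)).
  - apply continuous_const.
  - apply ex_derive_continuous. exists (std_kernel t).
    apply is_derive_RInt with (a := 0); [|apply gauss_kernel_cont].
    apply filter_forall. intros b. exact (RInt_correct _ 0 b (gauss_kernel_ex_RInt _ 0 b)).
Qed.

Lemma Phi_range t : 0 <= Phi t <= std_mass.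
Proof.
  split.
  - destruct (Rle_or_lt 0 (Phi t)) as [|Hlt]; auto. exfalso.
    destruct (Phi_tail t (- Phi t) ltac:(lra)) as [N HN].
    specialize (HN (Rmin (- N) t) (Rmin_l _ _)).
    pose proof (gauss_kernel_RInt_nonneg (/2) _ t (Rmin_r (- N) t)).
    unfold std_kernel in HN. apply Rabs_def2 in HN. lra.
  - destruct (Rle_or_lt (Phi t) std_mass) as [|Hlt]; auto. exfalso.
    destruct (Phi_tail t (Phi t - std_mass) ltac:(lra)) as [N HN].
    specialize (HN (Rmin (- N) t) (Rmin_l _ _)).
    pose proof (std_kernel_RInt_bound _ t (Rmin_r (- N) t)).
    apply Rabs_def2 in HN. lra.
Qed.

Lemma Phi_diff_range l h : l <= h -> 0 <= Phi h - Phi l <= std_mass.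
Proof.
  intros Hlh. rewrite Phi_diff. split.
  - apply gauss_kernel_RInt_nonneg; auto.
  - pose proof (Phi_range l). pose proof (Phi_range h).
    rewrite <- Phi_diff. lra.
Qed.

Lemma indic_true (P : Prop) : P -> indic P = 1.
Proof. intros H. unfold indic. destruct (excluded_middle_informative P); tauto. Qed.

Lemma indic_false (P : Prop) : ~ P -> indic P = 0.
Proof. intros H. unfold indic. destruct (excluded_middle_informative P); tauto. Qed.

Lemma indic_iff (P Q : Prop) : (P <-> Q) -> indic P = indic Q.
Proof.
  intros H. unfold indic.
  destruct (excluded_middle_informative P), (excluded_middle_informative Q); tauto.
Qed.

Lemma indic_le (P Q : Prop) : (P -> Q) -> indic P <= indic Q.
Proof.
  intros H. unfold indic.
  destruct (excluded_middle_informative P), (excluded_middle_informative Q); tauto || lra.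
Qed.

Lemma is_RInt_std_kernel_segment a l h b : a <= l -> l <= h -> h <= b ->
  is_RInt (fun y => indic (l <= y <= h) * std_kernel y) a b (RInt std_kernel l h).
Proof.
  intros H1 H2 H3.
  replace (RInt std_kernel l h) with (plus (plus 0 (RInt std_kernel l h)) 0)
    by (unfold plus; simpl; ring).
  apply (is_RInt_Chasles (V:=R_NormedModule)) with h;
    [apply (is_RInt_Chasles (V:=R_NormedModule)) with l|].
  - apply (is_RInt_ext (V:=R_NormedModule)) with (fun _ => 0); [|apply is_RInt_zero].
    intros x Hx. cbv beta. rewrite Rmin_left, Rmax_right in Hx by lra.
    rewrite indic_false by lra. now rewrite Rmult_0_l.
  - apply (is_RInt_ext (V:=R_NormedModule)) with std_kernel;
      [|exact (RInt_correct _ l h (gauss_kernel_ex_RInt _ l h))].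
    intros x Hx. cbv beta. rewrite Rmin_left, Rmax_right in Hx by lra.
    rewrite indic_true by lra. now rewrite Rmult_1_l.
  - apply (is_RInt_ext (V:=R_NormedModule)) with (fun _ => 0); [|apply is_RInt_zero].
    intros x Hx. cbv beta. rewrite Rmin_left, Rmax_right in Hx by lra.
    rewrite indic_false by lra. now rewrite Rmult_0_l.
Qed.

Lemma improper_RInt_segment l h : l <= h ->
  improper_RInt (fun y => indic (l <= y <= h) * std_kernel y) (Phi h - Phi l).
Proof.
  intros Hlh eps Heps. exists (Rabs l + Rabs h). intros a b Ha Hb.
  pose proof (Rle_abs l). pose proof (Rle_abs (-l)).
  pose proof (Rle_abs h). pose proof (Rle_abs (-h)). rewrite Rabs_Ropp in *.
  exists (RInt std_kernel l h). split.
  - apply is_RInt_std_kernel_segment; lra.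
  - rewrite Phi_diff, Rminus_diag, Rabs_R0. auto.
Qed.

Lemma improper_RInt_half_line h :
  improper_RInt (fun y => indic (y <= h) * std_kernel y) (Phi h).
Proof.
  intros eps Heps. destruct (Phi_tail h eps Heps) as [N0 HN0].
  exists (Rabs N0 + Rabs h). intros a b Ha Hb.
  pose proof (Rle_abs N0). pose proof (Rle_abs (-N0)).
  pose proof (Rle_abs h). pose proof (Rle_abs (-h)). rewrite Rabs_Ropp in *.
  pose proof (Rabs_pos N0). pose proof (Rabs_pos h).
  exists (RInt std_kernel a h). split.
  - apply (is_RInt_ext (V:=R_NormedModule)) with (fun y => indic (a <= y <= h) * std_kernel y).
    + intros x Hx. cbv beta. rewrite Rmin_left in Hx by lra. f_equal. apply indic_iff. lra.
    + apply is_RInt_std_kernel_segment; lra.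
  - apply HN0. lra.
Qed.

Lemma le_of_sqr_le a b : 0 <= b -> a * a <= b * b -> a <= b.
Proof. intros Hb Hab. apply Rsqr_incr_0_var; auto. Qed.

(* With s = sqrt c and k2 = 1 - r^2, each slice is an interval whose
   endpoints are s, the circle edge +-sqrt(c - k2 x1^2) and the line edge
   (s - k2 x1) / r; which ones occur depends on the sign of r and on where x1
   lies relative to 0, s and the reach s / sqrt k2 of the circle. *)
Section Slices.
Variables r c : R.
Hypothesis Hr : -1 < r < 1.
Hypothesis Hc : 0 <= c.

Let s := sqrt c.
Let k2 := 1 - r * r.
Lemma s_pos : 0 <= s. Proof. apply sqrt_pos. Qed.
Lemma s_sq : s * s = c. Proof. apply sqrt_sqrt; auto. Qed.
Lemma k2_pos : 0 < k2. Proof. unfold k2; nra. Qed.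

Definition circ_edge (x1 : R) : R := sqrt (c - (1 - r * r) * x1 * x1).
Definition line_edge (x1 : R) : R := (sqrt c - (1 - r * r) * x1) / r.

Lemma circ_edge_sqr x1 : (1 - r * r) * x1 * x1 <= c ->
  0 <= circ_edge x1 /\ circ_edge x1 * circ_edge x1 = c - (1 - r * r) * x1 * x1.
Proof. intros H. unfold circ_edge. split; [apply sqrt_pos | apply sqrt_sqrt; lra]. Qed.

Lemma circ_edge_defined x1 : 0 <= x1 <= s -> (1 - r * r) * x1 * x1 <= c.
Proof.
  intros Hx. pose proof s_sq as Hs2. pose proof k2_pos.
  assert (x1 * x1 <= c) by (rewrite <- Hs2; apply Rmult_le_compat; lra).
  unfold k2 in *. nra.
Qed.

Lemma accept_unfold x1 y : accept r c x1 y <->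
  (y <= s /\ k2 * x1 + r * y <= s /\ (0 <= x1 -> r * x1 <= y -> y * y + k2 * x1 * x1 <= c)).
Proof. unfold accept, s, k2. tauto. Qed.

Lemma slice_pos_left x1 y : 0 <= r -> x1 <= 0 -> (accept r c x1 y <-> y <= s).
Proof.
  intros Hr0 Hx. rewrite accept_unfold. pose proof s_pos. pose proof s_sq. pose proof k2_pos.
  split; [tauto|]. intros Hy. split; [auto|split].
  - assert (r * y <= r * s) by (apply Rmult_le_compat_l; auto).
    assert (k2 * x1 <= 0) by (apply Rmult_le_0_l; lra). nra.
  - intros Hx0 Hy0. assert (x1 = 0) by lra. subst x1.
    assert (0 <= y) by lra. assert (y * y <= s * s) by (apply Rmult_le_compat; lra). lra.
Qed.

Lemma slice_pos_mid x1 y : 0 <= r -> 0 <= x1 <= s -> (accept r c x1 y <-> y <= circ_edge x1).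
Proof.
  intros Hr0 Hx. rewrite accept_unfold. pose proof s_pos. pose proof s_sq. pose proof k2_pos.
  pose proof (circ_edge_defined x1 Hx) as Hk.
  destruct (circ_edge_sqr x1 Hk) as [HE0 HE2]. set (E := circ_edge x1) in *. fold k2 in HE2.
  assert (HErx : r * x1 <= E).
  { apply le_of_sqr_le; auto. assert (0 <= r * r * (x1 * x1)) by nra. unfold k2 in HE2. nra. }
  assert (HEs : E <= s) by (apply le_of_sqr_le; auto; nra).
  split.
  - intros [H2 [H3 H4]]. destruct (Rle_or_lt y E) as [|Hlt]; auto. exfalso.
    assert (y * y + k2 * x1 * x1 <= c) by (apply H4; lra). nra.
  - intros Hy. split; [lra|split].
    + assert (r * y <= r * E) by (apply Rmult_le_compat_l; auto).
      assert (Hid : c - (k2 * x1 + r * E) * (k2 * x1 + r * E) = k2 * ((E - r * x1) * (E - r * x1))).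
      { rewrite <- (Rplus_0_r c). replace (c + 0) with (E * E + k2 * x1 * x1) by lra.
        unfold k2. ring. }
      assert (0 <= k2 * ((E - r * x1) * (E - r * x1)))
        by (apply Rmult_le_pos; [lra | apply Rle_0_sqr]).
      assert (k2 * x1 + r * E <= s) by (apply le_of_sqr_le; auto; lra). lra.
    + intros Hx0 Hry. assert (0 <= y) by nra.
      assert (y * y <= E * E) by (apply Rmult_le_compat; lra). lra.
Qed.

Lemma slice_pos_right x1 y : 0 < r -> s <= x1 -> (accept r c x1 y <-> y <= line_edge x1).
Proof.
  intros Hr0 Hx. rewrite accept_unfold. pose proof s_pos. pose proof s_sq. pose proof k2_pos.
  unfold line_edge. fold s. fold k2.
  assert (Hiff : y <= (s - k2 * x1) / r <-> k2 * x1 + r * y <= s).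
  { split; intros H2.
    - apply Rmult_le_compat_l with (r := r) in H2; [|lra].
      replace (r * ((s - k2 * x1) / r)) with (s - k2 * x1) in H2 by (field; lra). lra.
    - apply Rmult_le_reg_l with r; auto.
      replace (r * ((s - k2 * x1) / r)) with (s - k2 * x1) by (field; lra). lra. }
  rewrite Hiff. split; [tauto|]. intros H2. split; [|split; auto].
  - assert (s * (1 - r) <= k2 * x1).
    { unfold k2. replace ((1 - r * r) * x1) with ((1 - r) * ((1 + r) * x1)) by ring.
      rewrite Rmult_comm. apply Rmult_le_compat_l; nra. }
    assert (r * y <= r * s) by lra. apply Rmult_le_reg_l with r; auto.
  - intros Hx0 Hy. assert (r * (r * x1) <= r * y) by (apply Rmult_le_compat_l; lra).
    assert (x1 <= s) by (unfold k2 in *; nra).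
    assert (x1 = s) by lra. subst x1.
    assert (y = r * s).
    { assert (r * y <= r * (r * s)) by (unfold k2 in *; nra).
      assert (y <= r * s) by (apply Rmult_le_reg_l with r; auto). lra. }
    subst y. unfold k2. nra.
Qed.

Lemma slice_zero_right x1 y : r = 0 -> s < x1 -> ~ accept r c x1 y.
Proof.
  intros Hr0 Hx. rewrite accept_unfold. subst r. unfold k2. intros [_ [H _]]. lra.
Qed.

(* For r < 0 the slice is a segment; dividing by r < 0 turns the line
   condition into a lower bound on y. *)
Lemma line_edge_le_iff x1 y : r < 0 -> (line_edge x1 <= y <-> k2 * x1 + r * y <= s).
Proof.
  intros Hr0. unfold line_edge. fold s. fold k2. split; intros H2.
  - apply Rmult_le_compat_neg_l with (r := r) in H2; [|lra].
    replace (r * ((s - k2 * x1) / r)) with (s - k2 * x1) in H2 by (field; lra). lra.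
  - apply Rmult_le_reg_l with (- r); [lra|].
    replace (- r * ((s - k2 * x1) / r)) with (- (s - k2 * x1)) by (field; lra). lra.
Qed.

Lemma slice_neg_left x1 y : r < 0 -> x1 <= 0 -> (accept r c x1 y <-> line_edge x1 <= y <= s).
Proof.
  intros Hr0 Hx. rewrite accept_unfold, line_edge_le_iff by auto. pose proof s_pos. pose proof s_sq.
  split; [tauto|]. intros [H1 H2]. split; auto. split; auto.
  intros Hx0 Hy0. assert (x1 = 0) by lra. subst x1.
  assert (0 <= y) by lra. assert (y * y <= s * s) by (apply Rmult_le_compat; lra). lra.
Qed.

Lemma line_edge_le_sqrt x1 : r < 0 -> x1 <= 0 -> line_edge x1 <= s.
Proof.
  intros Hr0 Hx. pose proof s_pos. pose proof k2_pos.
  apply line_edge_le_iff; auto. assert (k2 * x1 <= 0) by (apply Rmult_le_0_l; lra). nra.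
Qed.

Lemma slice_neg_mid x1 y : r < 0 -> 0 <= x1 <= s ->
  (accept r c x1 y <-> line_edge x1 <= y <= circ_edge x1).
Proof.
  intros Hr0 Hx. rewrite accept_unfold, line_edge_le_iff by auto.
  pose proof s_pos. pose proof s_sq. pose proof k2_pos.
  pose proof (circ_edge_defined x1 Hx) as Hk.
  destruct (circ_edge_sqr x1 Hk) as [HE0 HE2]. set (E := circ_edge x1) in *. fold k2 in HE2.
  assert (HErx : - (r * x1) <= E).
  { apply le_of_sqr_le; auto. assert (0 <= r * r * (x1 * x1)) by nra. unfold k2 in HE2. nra. }
  assert (HEs : E <= s) by (apply le_of_sqr_le; auto; nra).
  split.
  - intros [H2 [H3 H4]]. split; auto. destruct (Rle_or_lt y E) as [|Hlt]; auto. exfalso.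
    assert (y * y + k2 * x1 * x1 <= c) by (apply H4; nra). nra.
  - intros [Hy1 Hy2]. split; [lra|split; auto].
    intros Hx0 Hry. assert (y * y <= E * E) by nra. lra.
Qed.

Lemma line_edge_le_circ_edge x1 : r < 0 -> 0 <= x1 <= s -> line_edge x1 <= circ_edge x1.
Proof.
  intros Hr0 Hx. pose proof s_pos. pose proof s_sq. pose proof k2_pos.
  pose proof (circ_edge_defined x1 Hx) as Hk.
  destruct (circ_edge_sqr x1 Hk) as [HE0 HE2].
  apply Rle_trans with 0; auto.
  unfold line_edge. fold s. apply Rmult_le_reg_l with (- r); [lra|].
  replace (- r * ((s - (1 - r * r) * x1) / r)) with (- (s - (1 - r * r) * x1)) by (field; lra).
  assert ((1 - r * r) * x1 <= s); [|lra].
  assert ((1 - r * r) * x1 <= x1) by nra. lra.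
Qed.

Lemma slice_neg_right x1 y : r < 0 -> s <= x1 -> (1 - r * r) * x1 * x1 <= c ->
  (accept r c x1 y <-> - circ_edge x1 <= y <= circ_edge x1).
Proof.
  intros Hr0 Hx Hk. rewrite accept_unfold. pose proof s_pos. pose proof s_sq. pose proof k2_pos.
  destruct (circ_edge_sqr x1 Hk) as [HE0 HE2]. set (E := circ_edge x1) in *. fold k2 in HE2, Hk.
  assert (HEs : E <= s) by (apply le_of_sqr_le; auto; nra).
  split.
  - intros [H2 [H3 H4]].
    assert (Hry : r * x1 <= y).
    { apply Rmult_le_reg_l with (- r); [lra|].
      assert (k2 * x1 + r * r * x1 = x1) by (unfold k2; ring). nra. }
    assert (y * y + k2 * x1 * x1 <= c) by (apply H4; lra).
    assert (y * y <= E * E) by lra.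
    split; [| apply le_of_sqr_le; auto; lra].
    destruct (Rle_or_lt (- E) y); auto. nra.
  - intros [Hy1 Hy2]. assert (y * y <= E * E) by nra.
    split; [lra|split].
    + assert (Hid : k2 * x1 * x1 + y * y - (k2 * x1 + r * y) * (k2 * x1 + r * y) =
                    k2 * ((r * x1 - y) * (r * x1 - y))) by (unfold k2; ring).
      assert (0 <= k2 * ((r * x1 - y) * (r * x1 - y)))
        by (apply Rmult_le_pos; [lra | apply Rle_0_sqr]).
      apply le_of_sqr_le; auto. lra.
    + intros; lra.
Qed.

Lemma slice_neg_far x1 y : r < 0 -> s <= x1 -> c < (1 - r * r) * x1 * x1 -> ~ accept r c x1 y.
Proof.
  intros Hr0 Hx Hk. rewrite accept_unfold. pose proof s_pos. pose proof k2_pos. fold k2 in Hk.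
  intros [H2 [H3 H4]].
  assert (Hry : r * x1 <= y).
  { apply Rmult_le_reg_l with (- r); [lra|].
    assert (k2 * x1 + r * r * x1 = x1) by (unfold k2; ring). nra. }
  assert (y * y + k2 * x1 * x1 <= c) by (apply H4; lra).
  assert (0 <= y * y) by apply Rle_0_sqr. lra.
Qed.

End Slices.

Definition circ_reach (r c : R) : R := sqrt c / sqrt (1 - r * r).

Lemma le_circ_reach_iff r c x1 : -1 < r < 1 -> 0 <= c -> 0 <= x1 ->
  (x1 <= circ_reach r c <-> (1 - r * r) * x1 * x1 <= c).
Proof.
  intros Hr Hc Hx. unfold circ_reach.
  assert (Hk : 0 < 1 - r * r) by nra.
  pose proof (sqrt_lt_R0 _ Hk) as Hsk. pose proof (sqrt_sqrt _ (Rlt_le _ _ Hk)) as Hkk.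
  pose proof (sqrt_pos c). pose proof (sqrt_sqrt c Hc) as Hcc.
  set (q := sqrt (1 - r * r)) in *.
  replace ((1 - r * r) * x1 * x1) with ((q * x1) * (q * x1)) by (rewrite <- Hkk; ring).
  assert (Hdiv : q * (sqrt c / q) = sqrt c) by (field; lra).
  split; intros H1.
  - apply Rmult_le_compat_l with (r := q) in H1; [|lra]. rewrite Hdiv in H1.
    rewrite <- Hcc. apply Rmult_le_compat; nra.
  - apply Rmult_le_reg_l with q; auto. rewrite Hdiv.
    apply le_of_sqr_le; auto. lra.
Qed.

(* The mass int indic(accept r c x1 y) exp(-y^2/2) dy of a slice. *)
Definition inner_mass (r c x1 : R) : R :=
  if Rle_dec 0 r then
    if Rle_dec x1 0 then Phi (sqrt c)
    else if Rle_dec x1 (sqrt c) then Phi (circ_edge r c x1)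
    else if Rlt_dec 0 r then Phi (line_edge r c x1) else 0
  else
    if Rle_dec x1 0 then Phi (sqrt c) - Phi (line_edge r c x1)
    else if Rle_dec x1 (sqrt c) then Phi (circ_edge r c x1) - Phi (line_edge r c x1)
    else if Rle_dec x1 (circ_reach r c) then
      Phi (circ_edge r c x1) - Phi (- circ_edge r c x1)
    else 0.

Lemma improper_RInt_slice (P Q : R -> Prop) v :
  (forall y, P y <-> Q y) -> improper_RInt (fun y => indic (Q y) * std_kernel y) v ->
  improper_RInt (fun y => indic (P y) * std_kernel y) v.
Proof.
  intros HPQ HQ. eapply improper_RInt_ext; [|exact HQ].
  intros y. cbv beta. f_equal. apply indic_iff. symmetry. auto.
Qed.

Lemma improper_RInt_empty_slice (P : R -> Prop) :
  (forall y, ~ P y) -> improper_RInt (fun y => indic (P y) * std_kernel y) 0.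
Proof.
  intros HP. apply improper_RInt_ext with (fun _ => 0); [|apply improper_RInt_zero].
  intros y. rewrite indic_false by auto. ring.
Qed.

Lemma inner_mass_spec r c x1 : -1 < r < 1 -> 0 <= c ->
  improper_RInt (fun y => indic (accept r c x1 y) * std_kernel y) (inner_mass r c x1).
Proof.
  intros Hr Hc. unfold inner_mass. pose proof (sqrt_pos c).
  destruct (Rle_dec 0 r) as [Hr0|Hr0];
    [ destruct (Rle_dec x1 0); [|destruct (Rle_dec x1 (sqrt c));
                                [|destruct (Rlt_dec 0 r)]]
    | destruct (Rle_dec x1 0); [|destruct (Rle_dec x1 (sqrt c));
                                [|destruct (Rle_dec x1 (circ_reach r c)) as [Hx|Hx]]]].
  - eapply improper_RInt_slice; [|apply improper_RInt_half_line].
    intros y. apply slice_pos_left; auto.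
  - eapply improper_RInt_slice; [|apply improper_RInt_half_line].
    intros y. apply slice_pos_mid; auto; lra.
  - eapply improper_RInt_slice; [|apply improper_RInt_half_line].
    intros y. apply slice_pos_right; auto; lra.
  - apply improper_RInt_empty_slice. intros y. apply slice_zero_right; auto; lra.
  - eapply improper_RInt_slice;
      [|apply improper_RInt_segment, line_edge_le_sqrt; auto; lra].
    intros y. apply slice_neg_left; auto; lra.
  - eapply improper_RInt_slice;
      [|apply improper_RInt_segment, line_edge_le_circ_edge; auto; lra].
    intros y. apply slice_neg_mid; auto; lra.
  - apply le_circ_reach_iff in Hx; auto; [|lra].
    pose proof (circ_edge_sqr r c x1 Hx) as [HE _].
    eapply improper_RInt_slice; [|apply improper_RInt_segment; lra].
    intros y. apply slice_neg_right; auto; lra.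
  - assert (Hk : c < (1 - r * r) * x1 * x1).
    { destruct (Rlt_or_le c ((1 - r * r) * x1 * x1)) as [|Hle]; auto.
      exfalso. apply Hx. apply le_circ_reach_iff; auto; lra. }
    apply improper_RInt_empty_slice. intros y. apply slice_neg_far; auto; lra.
Qed.

Lemma inner_mass_range r c x1 : -1 < r < 1 -> 0 <= c -> 0 <= inner_mass r c x1 <= std_mass.
Proof.
  intros Hr Hc. unfold inner_mass. pose proof (sqrt_pos c). pose proof std_mass_pos.
  destruct (Rle_dec 0 r) as [Hr0|Hr0].
  - repeat match goal with |- context [if ?t then _ else _] => destruct t end;
      try apply Phi_range; lra.
  - destruct (Rle_dec x1 0).
    { apply Phi_diff_range, line_edge_le_sqrt; auto; lra. }
    destruct (Rle_dec x1 (sqrt c)).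
    { apply Phi_diff_range, line_edge_le_circ_edge; auto; lra. }
    destruct (Rle_dec x1 (circ_reach r c)) as [Hx|]; [|lra].
    apply le_circ_reach_iff in Hx; auto; [|lra].
    pose proof (circ_edge_sqr r c x1 Hx) as [HE _]. apply Phi_diff_range. lra.
Qed.

Definition marginal_factor (r x1 : R) : R :=
  sqrt (1 - r * r) / (2 * PI) * gauss_kernel ((1 - r * r) / 2) x1.

Lemma marginal_factor_nonneg r x1 : 0 <= marginal_factor r x1.
Proof.
  unfold marginal_factor. apply Rmult_le_pos; [|left; apply exp_pos].
  apply Rmult_le_pos; [apply sqrt_pos|].
  left. apply Rinv_0_lt_compat. pose proof PI_RGT_0; lra.
Qed.

Lemma gauss_dens_factor r x1 x2 : -1 < r < 1 ->
  gauss_dens (inv2 (Mrho r)) x1 x2 = marginal_factor r x1 * std_kernel (x2 + r * x1).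
Proof.
  intros Hr. rewrite gauss_dens_Mrho by auto.
  unfold marginal_factor, std_kernel, gauss_kernel. rewrite Rmult_assoc, <- exp_plus.
  f_equal. f_equal. unfold Qrho. field.
Qed.

Definition outer_integrand (r c x1 : R) : R :=
  if Rle_dec 0 c then marginal_factor r x1 * inner_mass r c x1 else 0.

Lemma inner_integral_spec r c x1 : -1 < r < 1 ->
  improper_RInt
    (fun x2 => indic (chibar_stat (inv2 (Mrho r)) x1 x2 <= c) * gauss_dens (inv2 (Mrho r)) x1 x2)
    (outer_integrand r c x1).
Proof.
  intros Hr. unfold outer_integrand. destruct (Rle_dec 0 c) as [Hc|Hc].
  - pose proof (improper_RInt_scal _ _ (marginal_factor r x1)
      (improper_RInt_shift _ _ (r * x1) (inner_mass_spec r c x1 Hr Hc))) as H.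
    eapply improper_RInt_ext; [|exact H]. intros x2. cbv beta.
    rewrite gauss_dens_factor by auto.
    rewrite (indic_iff _ _ (chibar_stat_le_accept r c Hr Hc x1 x2)). ring.
  - apply improper_RInt_ext with (fun _ => 0); [|apply improper_RInt_zero].
    intros x2. pose proof (chibar_stat_nonneg r x1 x2 Hr).
    rewrite indic_false by lra. ring.
Qed.

Definition loc_integrable (f : R -> R) : Prop := forall a b, ex_RInt f a b.

Lemma loc_integrable_cont f : (forall x, continuous f x) -> loc_integrable f.
Proof. intros H a b. apply (ex_RInt_continuous (V:=R_CompleteNormedModule)). auto. Qed.

Lemma loc_integrable_mul_if h f g p :
  loc_integrable (fun x => h x * f x) -> loc_integrable (fun x => h x * g x) ->
  loc_integrable (fun x => h x * (if Rle_dec x p then f x else g x)).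
Proof.
  intros Hf Hg.
  set (F := fun x => h x * (if Rle_dec x p then f x else g x)).
  assert (Left : forall a b, a <= p -> b <= p -> ex_RInt F a b).
  { intros a b Ha Hb. apply (ex_RInt_ext (V:=R_NormedModule)) with (fun x => h x * f x); auto.
    intros x Hx. assert (Rmax a b <= p) by (apply Rmax_lub; lra).
    unfold F. destruct (Rle_dec x p); [auto | lra]. }
  assert (Right : forall a b, p <= a -> p <= b -> ex_RInt F a b).
  { intros a b Ha Hb. apply (ex_RInt_ext (V:=R_NormedModule)) with (fun x => h x * g x); auto.
    intros x Hx. assert (p <= Rmin a b) by (apply Rmin_glb; lra).
    unfold F. destruct (Rle_dec x p); [lra | auto]. }
  assert (Both : forall a, ex_RInt F a p /\ ex_RInt F p a).
  { intros a. destruct (Rle_or_lt a p); split; first [apply Left; lra | apply Right; lra]. }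
  intros a b. apply (ex_RInt_Chasles (V:=R_NormedModule)) with p; apply Both.
Qed.

Lemma marginal_factor_cont r x : continuous (marginal_factor r) x.
Proof. apply continuity_pt_continuous. unfold marginal_factor, gauss_kernel. reg. Qed.

Lemma circ_edge_cont r c x : continuous (circ_edge r c) x.
Proof. apply continuous_sqrt_comp, continuity_pt_continuous. reg. Qed.

Lemma line_edge_cont r c x : continuous (line_edge r c) x.
Proof. apply continuity_pt_continuous. unfold line_edge, Rdiv. reg. Qed.

Lemma Phi_comp_cont (f : R -> R) x : continuous f x -> continuous (fun y => Phi (f y)) x.
Proof. intros H. apply continuous_comp; auto. apply Phi_cont. Qed.

Ltac solve_continuous :=
  lazymatch goal with
  | |- continuous (fun _ => _ * _) _ =>
      apply (continuous_mult (K:=R_AbsRing)); solve_continuous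
  | |- continuous (fun _ => _ - _) _ =>
      apply (continuous_minus (V:=R_NormedModule)); solve_continuous
  | |- continuous (fun _ => - _) _ =>
      apply (continuous_opp (V:=R_NormedModule)); solve_continuous
  | |- continuous (fun _ => Phi _) _ => apply Phi_comp_cont; solve_continuous
  | |- continuous (marginal_factor _) _ => apply marginal_factor_cont
  | |- continuous (circ_edge _ _) _ => apply circ_edge_cont
  | |- continuous (line_edge _ _) _ => apply line_edge_cont
  | |- continuous (fun _ => ?k) _ => apply continuous_const
  end.

Ltac glue_pieces :=
  lazymatch goal with
  | |- loc_integrable (fun x => _ * (if Rle_dec x _ then _ else _)) =>
      apply loc_integrable_mul_if; glue_pieces
  | |- loc_integrable _ => apply loc_integrable_cont; intros ?; solve_continuous
  end.

(* The outer integrand is continuous on each of the pieces of [inner_mass]. *)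
Lemma outer_integrand_loc_integrable r c : loc_integrable (outer_integrand r c).
Proof.
  unfold outer_integrand. destruct (Rle_dec 0 c); [|glue_pieces].
  unfold inner_mass. destruct (Rle_dec 0 r); [destruct (Rlt_dec 0 r)|]; glue_pieces.
Qed.

(* Domination by a Gaussian in x1 bounds the integrals over all segments. *)
Lemma outer_integrand_range r c x1 : -1 < r < 1 ->
  0 <= outer_integrand r c x1 <= marginal_factor r x1 * std_mass.
Proof.
  intros Hr. unfold outer_integrand. pose proof (marginal_factor_nonneg r x1).
  pose proof std_mass_pos.
  destruct (Rle_dec 0 c) as [Hc|Hc]; [|split; [lra | apply Rmult_le_pos; lra]].
  pose proof (inner_mass_range r c x1 Hr Hc). split.
  - apply Rmult_le_pos; lra.
  - apply Rmult_le_compat_l; lra.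
Qed.

Lemma outer_integrand_bounded r c : -1 < r < 1 ->
  exists B, forall a b, a <= b -> RInt (outer_integrand r c) a b <= B.
Proof.
  intros Hr. set (K := sqrt (1 - r * r) / (2 * PI) * std_mass).
  set (k := (1 - r * r) / 2).
  assert (HK : 0 <= K).
  { apply Rmult_le_pos; [|left; apply std_mass_pos]. apply Rmult_le_pos; [apply sqrt_pos|].
    left. apply Rinv_0_lt_compat. pose proof PI_RGT_0; lra. }
  assert (Hk : 0 < k) by (unfold k; nra).
  exists (K * (PI / sqrt k)). intros a b Hab.
  assert (HI : is_RInt (fun x => K * gauss_kernel k x) a b (K * RInt (gauss_kernel k) a b))
    by exact (is_RInt_scal _ a b K _ (RInt_correct _ a b (gauss_kernel_ex_RInt _ a b))).
  apply Rle_trans with (RInt (fun x => K * gauss_kernel k x) a b).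
  - apply RInt_le; auto; [apply outer_integrand_loc_integrable | eexists; exact HI |].
    intros x _. replace (K * gauss_kernel k x) with (marginal_factor r x * std_mass)
      by (unfold K, k, marginal_factor; ring).
    apply outer_integrand_range; auto.
  - rewrite (is_RInt_unique _ _ _ _ HI).
    apply Rmult_le_compat_l; auto. apply gauss_kernel_RInt_bound; auto.
Qed.

Lemma chibar_cdf_exists r c : -1 < r < 1 -> exists p, chibar_cdf (inv2 (Mrho r)) c p.
Proof.
  intros Hr. destruct (improper_RInt_of_bounded (outer_integrand r c)) as [p Hp].
  - intros x. apply outer_integrand_range; auto.
  - apply outer_integrand_loc_integrable.
  - apply outer_integrand_bounded; auto.
  - exists p, (outer_integrand r c). split.
    + intros x1. apply improper_is_iff, inner_integral_spec; auto.
    + apply improper_is_iff; auto.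
Qed.

Section Coupling.
Variables l r : R.
Hypothesis Hl : -1 < l < 1.
Hypothesis Hr : -1 < r < 1.
Hypothesis Hlr : l <= r.

(* T(z1, z2) = (a z1, b z1 + z2). *)
Let a := sqrt (1 - r * r) / sqrt (1 - l * l).
Let b := r - l * a.

Lemma coupling_scale_pos : 0 < a.
Proof. unfold a. apply Rdiv_lt_0_compat; apply sqrt_lt_R0; nra. Qed.

Lemma coupling_scale_sqr : a * a * (1 - l * l) = 1 - r * r.
Proof.
  unfold a. assert (Hkl : 0 < 1 - l * l) by nra. assert (Hkr : 0 < 1 - r * r) by nra.
  pose proof (sqrt_lt_R0 _ Hkl).
  pose proof (sqrt_sqrt _ (Rlt_le _ _ Hkl)) as El. pose proof (sqrt_sqrt _ (Rlt_le _ _ Hkr)) as Er.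
  replace (sqrt (1 - r * r) / sqrt (1 - l * l) * (sqrt (1 - r * r) / sqrt (1 - l * l)))
    with ((sqrt (1 - r * r) * sqrt (1 - r * r)) / (sqrt (1 - l * l) * sqrt (1 - l * l)))
    by (field; lra).
  rewrite El, Er. field. lra.
Qed.

(* b >= 0, i.e. l a <= r: (l a)^2 - r^2 has the sign of l^2 - r^2. *)
Lemma coupling_shear_nonneg : 0 <= b.
Proof.
  unfold b. pose proof coupling_scale_pos. pose proof coupling_scale_sqr as Ha.
  assert (Hkey : (l * a) * (l * a) * (1 - l * l) - r * r * (1 - l * l) = l * l - r * r).
  { replace ((l * a) * (l * a) * (1 - l * l)) with (l * l * (a * a * (1 - l * l))) by ring.
    rewrite Ha. ring. }
  assert (Hkl : 0 < 1 - l * l) by nra.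
  destruct (Rle_or_lt 0 l) as [Hl0|Hl0]; [|destruct (Rle_or_lt 0 r)].
  - assert (l * a <= r); [|lra].
    apply le_of_sqr_le; [lra|]. apply Rmult_le_reg_r with (1 - l * l); nra.
  - nra.
  - assert (- r <= - (l * a)); [|lra].
    apply le_of_sqr_le; [nra|]. apply Rmult_le_reg_r with (1 - l * l); nra.
Qed.

Lemma Qrho_coupling z1 z2 : Qrho l (a * z1) (b * z1 + z2) = Qrho r z1 z2.
Proof.
  pose proof coupling_scale_sqr as Ha. unfold Qrho, b.
  replace ((a * z1) * (a * z1) + 2 * l * (a * z1) * ((r - l * a) * z1 + z2)
           + ((r - l * a) * z1 + z2) * ((r - l * a) * z1 + z2))
    with ((a * a * (1 - l * l)) * (z1 * z1) + r * r * (z1 * z1) + 2 * r * z1 * z2 + z2 * z2)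
    by ring.
  rewrite Ha. ring.
Qed.

Lemma coupling_cone t1 t2 : LambdaPlus t1 t2 -> LambdaPlus (a * t1) (b * t1 + t2).
Proof.
  intros [Ht1 [Ht2 Ht]]. pose proof coupling_scale_pos. pose proof coupling_shear_nonneg.
  unfold LambdaPlus. split; [nra|split; [nra|]].
  destruct (Rle_or_lt t1 0); [assert (t1 = 0) by lra; subst t1; lra | nra].
Qed.

(* Every gain for r at z is a gain for l at T z. *)
Lemma chibar_stat_coupling z1 z2 c :
  chibar_stat (inv2 (Mrho l)) (a * z1) (b * z1 + z2) <= c ->
  chibar_stat (inv2 (Mrho r)) z1 z2 <= c.
Proof.
  rewrite !chibar_stat_le_iff by auto. intros H t1 t2 Ht.
  specialize (H _ _ (coupling_cone t1 t2 Ht)).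
  replace (a * z1 - a * t1) with (a * (z1 - t1)) in H by ring.
  replace (b * z1 + z2 - (b * t1 + t2)) with (b * (z1 - t1) + (z2 - t2)) in H by ring.
  rewrite !Qrho_coupling in H. exact H.
Qed.

(* Change of variables: T has Jacobian a. *)
Lemma gauss_dens_coupling z1 z2 :
  a * gauss_dens (inv2 (Mrho l)) (a * z1) (b * z1 + z2) = gauss_dens (inv2 (Mrho r)) z1 z2.
Proof.
  rewrite !gauss_dens_Mrho by auto. rewrite Qrho_coupling.
  assert (Hsq : a * sqrt (1 - l * l) = sqrt (1 - r * r)).
  { unfold a. field. apply Rgt_not_eq. apply sqrt_lt_R0. nra. }
  rewrite <- Hsq. field. pose proof PI_RGT_0. lra.
Qed.

Lemma chibar_cdf_coupling c pl pr :
  chibar_cdf (inv2 (Mrho l)) c pl -> chibar_cdf (inv2 (Mrho r)) c pr -> pl <= pr.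
Proof.
  intros [gl [Hgl1 Hgl2]] [gr [Hgr1 Hgr2]]. pose proof coupling_scale_pos as Ha.
  apply improper_is_iff in Hgl2. apply improper_is_iff in Hgr2.
  apply (improper_RInt_le (fun z1 => a * gl (a * z1)) gr pl pr);
    [apply improper_RInt_dilate; auto | exact Hgr2 |].
  intros z1.
  pose proof (Hgl1 (a * z1)) as Hin_l. apply improper_is_iff in Hin_l.
  pose proof (Hgr1 z1) as Hin_r. apply improper_is_iff in Hin_r.
  apply (improper_RInt_le _ _ _ _
           (improper_RInt_scal _ _ a (improper_RInt_shift _ _ (b * z1) Hin_l)) Hin_r).
  intros z2. cbv beta. rewrite (Rplus_comm z2 (b * z1)).
  rewrite <- Rmult_assoc, (Rmult_comm a), Rmult_assoc, gauss_dens_coupling.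
  apply Rmult_le_compat_r; [apply gauss_dens_Mrho_nonneg; auto|].
  apply indic_le, chibar_stat_coupling.
Qed.

End Coupling.

Lemma quantile_le_of_cdf_le V1 V2 alpha q1 q2 :
  (forall c p1, chibar_cdf V1 c p1 -> exists p2, chibar_cdf V2 c p2 /\ p1 <= p2) ->
  is_quantile V1 alpha q1 -> is_quantile V2 alpha q2 -> q2 <= q1.
Proof.
  intros Hdom [_ Hglb1] [Hlb2 _]. apply Hglb1.
  intros c [p1 [Hp1 Hlevel]]. destruct (Hdom c p1 Hp1) as [p2 [Hp2 Hle]].
  apply Hlb2. exists p2. split; auto. lra.
Qed.

Theorem mainTheorem8 :
  forall (l u alpha : R),
    -1 < l -> l <= u -> u < 1 -> 0 < alpha < 1 ->
    forall (cl : R), is_quantile (inv2 (Mrho l)) alpha cl ->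
    forall (rho c : R), l <= rho <= u ->
      is_quantile (inv2 (Mrho rho)) alpha c -> c <= cl.
Proof.
  intros l u alpha Hl Hlu Hu Halpha cl Hcl rho c Hrho Hc.
  apply (quantile_le_of_cdf_le (inv2 (Mrho l)) (inv2 (Mrho rho)) alpha); auto.
  intros x pl Hpl.
  destruct (chibar_cdf_exists rho x) as [pr Hpr]; [lra|].
  exists pr. split; auto.
  eapply (chibar_cdf_coupling l rho); eauto; lra.
Qed.
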